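(* Let $n\ge2$ and suppose $\Omega\subset\mathbb R^n$ is a globally $n$-regular domain. Let $\alpha\in(-n,0)$ and $\phi:[0,\infty)\to[0,\infty)$ be a Young function satisfying $\underline\Lambda_\phi(\alpha)<\infty$ and $\overline\Lambda_\phi(\alpha)<\infty$. Then there exist constants $C_1,C_2>0$ depending on $n,\alpha,\phi,\Omega$ such that $$\int_{\Omega\setminus E}\frac{\phi(t|x-y|^{-\alpha})}{|x-y|^{2n}}\,dy\ge C_1\frac1{|E|}\frac{|\Omega\setminus E|}{|\Omega|}\phi\big(C_2t|E|^{|\alpha|/n}\big)$$ whenever $t>0$, $x\in\Omega$ and $E\subset\Omega$ is measurable with $0<|E|<\infty$. Here, if $|\Omega|=\infty$, the ratio $\frac{|\Omega\setminus E|}{|\Omega|}$ is interpreted as $1$.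
   Context: A Young function is $\phi\in C([0,\infty))$, convex, with $\phi(0)=0$, $\phi(t)>0$ for $t>0$, $\lim_{t\to\infty}\phi(t)=\infty$. $\underline\Lambda_\phi(\alpha):=\sup_{x>0}\int_0^1\frac{\phi(t^{1-\alpha}x)}{\phi(x)}\frac{dt}{t^{n+1}}$, $\overline\Lambda_\phi(\alpha):=\sup_{x>0}\int_1^\infty\frac{\phi(t^{-\alpha}x)}{\phi(x)}\frac{dt}{t^{n+1}}$. A domain $\Omega$ is globally $n$-regular if there is $\theta\in(0,1)$ with $|B(x,r)\cap\Omega|\ge\theta r^n$ for all $x\in\Omega$ and all $0<r<2\operatorname{diam}\Omega$. *)

From HB Require Import structures.
From mathcomp Require Import all_boot all_order all_algebra.
From mathcomp Require Import all_classical all_reals all_analysis.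
Set Implicit Arguments. Unset Strict Implicit. Unset Printing Implicit Defensive.
Import Order.TTheory GRing.Theory Num.Theory.
Import numFieldNormedType.Exports.
Local Open Scope classical_set_scope.
Local Open Scope ring_scope.

Definition Rn (R : realType) (n : nat) := 'rV[R]_n.
HB.instance Definition _ (R : realType) n := Pointed.on (Rn R n).

Section discrete.
Variables (R : realType) (n : nat).
Definition Rn_all : set (set (Rn R n)) := setT.
Lemma Rn_all0 : Rn_all set0. Proof. by []. Qed.
Lemma Rn_allC A : Rn_all A -> Rn_all (~` A). Proof. by []. Qed.
Lemma Rn_allU (F : (set (Rn R n))^nat) : (forall i, Rn_all (F i)) ->
  Rn_all (\bigcup_i F i). Proof. by []. Qed.
End discrete.

HB.instance Definition _ (R : realType) n := @isMeasurable.Build default_measure_display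
  (Rn R n) (@Rn_all R n) (@Rn_all0 R n) (@Rn_allC R n) (@Rn_allU R n).

Local Open Scope ereal_scope.
Section lebesgue_outer.
Variables (R : realType) (n : nat).

Definition box (a b : 'rV[R]_n) : set (Rn R n) :=
  [set x : 'rV[R]_n | forall i, (a ord0 i <= x ord0 i < b ord0 i)%R].

Definition boxvol (a b : 'rV[R]_n) : R :=
  (\prod_(i < n) Num.max (b ord0 i - a ord0 i) 0)%R.

(** elementary volume: volume of a box, 0 on the empty set, +oo otherwise *)
Definition boxpre (A : set (Rn R n)) : \bar R :=
  ereal_inf [set r : \bar R | (A = set0 /\ r = 0) \/
     exists a b, A = box a b /\ r = (boxvol a b)%:E].

Lemma boxvol_ge0 a b : (0 <= boxvol a b)%R.
Proof. by apply: prodr_ge0 => i _; rewrite le_max lexx orbT. Qed.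

Lemma boxpre_ge0 A : 0 <= boxpre A.
Proof.
apply: le_ereal_inf_tmp => r [[_ ->]//|[a [b [_ ->]]]].
by rewrite lee_fin boxvol_ge0.
Qed.

Lemma boxpre0 : boxpre set0 = 0.
Proof.
apply/eqP; rewrite eq_le boxpre_ge0 andbT.
by apply: ereal_inf_lbound; left.
Qed.

Definition leb_outer : set (Rn R n) -> \bar R := mu_ext boxpre.

HB.instance Definition _ := isOuterMeasure.Build R (Rn R n) leb_outer
  (mu_ext0 boxpre0 boxpre_ge0) (mu_ext_ge0 boxpre_ge0) (le_mu_ext boxpre)
  (mu_ext_sigma_subadditive boxpre_ge0).

End lebesgue_outer.

Notation LRn R n := (caratheodory_type (@leb_outer R n)).

(** n-dimensional Lebesgue measure: restriction of the Lebesgue outer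
    measure to the Caratheodory-measurable (= Lebesgue measurable) sets *)
Definition lebesgue_n (R : realType) (n : nat) : set (LRn R n) -> \bar R :=
  @leb_outer R n.

HB.instance Definition _ (R : realType) n := isMeasure.Build _ _ _
  (@lebesgue_n R n) (@caratheodory_measure0 R (Rn R n) (@leb_outer R n))
  (@caratheodory_measure_ge0 R (Rn R n) (@leb_outer R n))
  (@caratheodory_measure_sigma_additive R (Rn R n) (@leb_outer R n)).

Local Open Scope ring_scope.

Definition enorm (R : realType) (n : nat) (x : 'rV[R]_n) : R :=
  Num.sqrt (\sum_(i < n) x ord0 i ^+ 2).
Definition eucl_dist (R : realType) (n : nat) (x y : 'rV[R]_n) : R := enorm (x - y).

Definition eball (R : realType) (n : nat) (x : 'rV[R]_n) (r : R) : set (LRn R n) :=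
  [set y : 'rV[R]_n | eucl_dist x y < r].

Definition ediam (R : realType) (n : nat) (O : set (LRn R n)) : \bar R :=
  ereal_sup [set (eucl_dist x y)%:E | x in O & y in O].

Definition is_domain (R : realType) (n : nat) (O : set (LRn R n)) : Prop :=
  O !=set0 /\ open (O : set 'rV[R]_n) /\ connected (O : set 'rV[R]_n).

Definition globally_regular (R : realType) (n : nat) (O : set (LRn R n)) : Prop :=
  exists theta : R, 0 < theta < 1 /\
    forall x, O x -> forall r : R, 0 < r -> (r%:E < 2%:E * ediam O)%E ->
      ((theta * r ^+ n)%:E <= lebesgue_n (eball x r `&` O))%E.

(** Young function (only its values on [0,oo) matter) *)
Definition young_function (R : realType) (phi : R -> R) : Prop :=
  {within `[0, +oo[, continuous phi} /\
  (forall x y l : R, 0 <= x -> 0 <= y -> 0 <= l <= 1 ->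
      phi (l * x + (1 - l) * y) <= l * phi x + (1 - l) * phi y) /\
  phi 0 = 0 /\
  (forall t, 0 < t -> 0 < phi t) /\
  (phi t @[t --> +oo] --> +oo).

Definition Lambda_low (R : realType) (n : nat) (phi : R -> R) (alpha : R) : \bar R :=
  ereal_sup [set (\int[lebesgue_measure]_(t in `]0%R, 1%R[)
        ((phi (t `^ (1 - alpha) * x) / phi x) / t ^+ n.+1)%:E)%E
     | x in [set x : R | 0 < x]].

Definition Lambda_up (R : realType) (n : nat) (phi : R -> R) (alpha : R) : \bar R :=
  ereal_sup [set (\int[lebesgue_measure]_(t in `[1%R, +oo[)
        ((phi (t `^ (- alpha) * x) / phi x) / t ^+ n.+1)%:E)%E
     | x in [set x : R | 0 < x]].

Definition vol_ratio (R : realType) (n : nat) (O E : set (LRn R n)) : R :=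
  if lebesgue_n O \is a fin_num
  then fine (lebesgue_n (O `\` E)) / fine (lebesgue_n O) else 1.

From HB Require Import structures.
From mathcomp Require Import all_boot all_order all_algebra.
From mathcomp Require Import all_classical all_reals all_analysis.
From mathcomp Require Import ring lra.

(* Finiteness of [Lambda_up], integrated over [[lam, 2 lam]], yields the
   dilation bound [phi (lam^-alpha u) <= K lam^n phi u] for [lam >= 1]; hence
   the kernel [phi (t d^-alpha) / d^2n] at a distance [0 < d <= rho] is at least
   [1/K] times its value at [rho]. It therefore suffices to find [S] inside
   [O \ E], avoiding [x], whose points lie within [rho] of [x], with
   [|S| >= |E| |O \ E| / |O|] and [rho^n] a fixed multiple of [|E|].
   Take [r] with [theta r^n = 2 |E|] and [rho = n r]. If [r < 2 diam O],
   regularity gives [|B(x,r) & O| >= 2 |E|], so [S] can be [O \ E] cut down to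
   the cube of half-side [r] around [x], which contains [B(x,r)] and lies within
   [n r] of [x]. Otherwise [O] lies within [r/2] of [x] and [S = O \ E]. *)

Set Implicit Arguments. Unset Strict Implicit. Unset Printing Implicit Defensive.
Import Order.TTheory GRing.Theory Num.Theory.
Import numFieldNormedType.Exports.
Local Open Scope classical_set_scope.
Local Open Scope ring_scope.

Section measure_lemmas.
Local Open Scope ereal_scope.

Lemma outer_measure0_caratheodory (R : realType) T
    (mu : {outer_measure set T -> \bar R}) (A : set T) :
  mu A = 0 -> mu.-caratheodory A.
Proof.
move=> muA0; apply: le_caratheodory_measurable => X.
have -> : mu (X `&` A) = 0.
  apply/eqP; rewrite eq_le outer_measure_ge0 andbT -muA0.
  by apply: le_outer_measure; exact: subIsetr.
by rewrite add0e; apply: le_outer_measure; exact: subIsetl.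
Qed.

Lemma mul_measure_le_integral d (T : measurableType d) (R : realType)
    (mu : {measure set T -> \bar R}) (A S : set T) (f : T -> R) (c : R) :
  measurable S -> S `<=` A -> (0 <= c)%R -> (forall y, A y -> 0 <= f y)%R ->
  (forall y, S y -> c <= f y)%R ->
  c%:E * mu S <= \int[mu]_(y in A) (f y)%:E.
Proof.
move=> mS SA c0 f0 Sf.
rewrite integral_mkcond ge0_integralTE; last first.
  by move=> y; rewrite patchE; case: ifPn => // /set_mem/f0; rewrite lee_fin.
apply: ereal_sup_ubound; exists (scale_nnsfun (indic_nnsfun R mS) c0).
  move=> y /=; rewrite patchE measurable_realfun.mindicE.
  have [yS|yS] := boolP (y \in S).
    rewrite ifT; last exact/mem_set/SA/set_mem.
    by rewrite mulr1 lee_fin; exact/Sf/set_mem.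
  by rewrite mulr0; case: ifPn => // /set_mem/f0; rewrite lee_fin.
by rewrite sintegralrM -sintegral_indic.
Qed.

Lemma mul_fine_ratio_le (R : realType) (a b : \bar R) (e : R) :
  0 <= a -> (0 <= e)%R -> e%:E <= b -> (e * (fine a / fine b))%:E <= a.
Proof.
case: a b => [a| |] [b| |] //=; rewrite ?lee_fin ?invr0 ?mulr0 ?leey // => a0 e0 eb.
have [->|b0] := eqVneq b 0%R; first by rewrite invr0 !mulr0.
have b_gt0 : (0 < b)%R by rewrite lt_neqAle eq_sym b0 (le_trans e0 eb).
by rewrite mulrCA ler_piMr // ?ler_pdivrMr ?mul1r // divr_ge0 // ltW.
Qed.

End measure_lemmas.

Section powR_root.
Context {R : realType}.

Lemma exprn_onto_gt0 (a : R) (n : nat) : (0 < n)%N -> 0 < a ->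
  exists2 r, 0 < r & r ^+ n = a.
Proof.
move=> n0 a0; exists (a `^ n%:R^-1); first exact: powR_gt0.
rewrite -powR_mulrn ?powR_ge0 // -powRrM mulVf ?powRr1 ?ltW //.
by rewrite pnatr_eq0 -lt0n.
Qed.

Lemma powR_exprn_mul (a b rho s : R) (n : nat) : (0 < n)%N ->
  0 <= a -> 0 <= b -> 0 <= rho -> rho ^+ n = a * b ->
  rho `^ s = a `^ (s / n%:R) * b `^ (s / n%:R).
Proof.
move=> n0 a0 b0 rho0 rhon.
rewrite -powRM // -rhon -powR_mulrn // -powRrM mulrC divfK //.
by rewrite pnatr_eq0 -lt0n.
Qed.

End powR_root.

Section lebesgue_outer_measure.
Context {R : realType} {n : nat}.
Implicit Types (a b : 'rV[R]_n) (i : 'I_n) (c : R).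

Lemma leb_outer_box a b : (leb_outer (box a b) <= (boxvol a b)%:E)%E.
Proof.
apply: (@le_trans _ _ (boxpre (box a b))).
  apply: ereal_inf_lbound; exists (fun k => if k is 0%N then box a b else set0).
    by split => // y Ay; exists 0%N.
  rewrite nneseries_recl //=; last by move=> k _; exact: boxpre_ge0.
  by rewrite eseries0 ?adde0 // => -[|k] // _ _; rewrite boxpre0.
by apply: ereal_inf_lbound; right; exists a, b.
Qed.

Definition halfspace i c : set (Rn R n) := [set y | y ord0 i < c].

Definition row_upd (v : 'rV[R]_n) i c : 'rV[R]_n :=
  \row_j (if j == i then c else v ord0 j).

Lemma row_updE v i c j : row_upd v i c ord0 j = if j == i then c else v ord0 j.
Proof. by rewrite mxE. Qed.

Lemma box_halfspace a b i c :
  box a b `&` halfspace i c = box a (row_upd b i (Num.min (b ord0 i) c)).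
Proof.
apply/seteqP; split => y /=.
  move=> [H yc] j; rewrite row_updE; case: eqP => [->|_]; last exact: H.
  by have /andP[-> ybi] := H i; rewrite lt_min ybi.
move=> H; split.
  move=> j; have := H j; rewrite row_updE; case: eqP => [->|_] //.
  by rewrite lt_min => /andP[-> /andP[]].
by have := H i; rewrite row_updE eqxx lt_min => /andP[_ /andP[]].
Qed.

Lemma box_halfspaceC a b i c :
  box a b `&` ~` halfspace i c = box (row_upd a i (Num.max (a ord0 i) c)) b.
Proof.
apply/seteqP; split => y /=.
  move=> [H yc] j; rewrite row_updE; case: eqP => [->|_]; last exact: H.
  have /andP[ai ->] := H i; rewrite ge_max ai andbT /=.
  by rewrite leNgt; apply/negP.
move=> H; split.
  move=> j; have := H j; rewrite row_updE; case: eqP => [->|_] //.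
  by rewrite ge_max => /andP[/andP[-> _] ->].
have := H i; rewrite row_updE eqxx ge_max => /andP[/andP[_ ci] _].
by apply/negP; rewrite -leNgt.
Qed.

Lemma itv_length_split (lo hi c : R) :
  Num.max (Num.min hi c - lo) 0 + Num.max (hi - Num.max lo c) 0 = Num.max (hi - lo) 0.
Proof.
by case: (leP hi c) => hc; case: (leP lo c) => lc;
  rewrite ?(minEle, maxEle, hc, lc, ltW hc, ltW lc) /=;
  repeat case: (leP _ _) => ?; lra.
Qed.

Lemma boxvol_split a b i c :
  boxvol a (row_upd b i (Num.min (b ord0 i) c)) +
  boxvol (row_upd a i (Num.max (a ord0 i) c)) b = boxvol a b.
Proof.
rewrite /boxvol (bigD1 i) //= [X in _ + X](bigD1 i) //= [X in _ = X](bigD1 i) //=.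
rewrite !row_updE !eqxx.
under eq_bigr => j /negPf ji do rewrite row_updE ji.
under [in X in _ + X]eq_bigr => j /negPf ji do rewrite row_updE ji.
by rewrite -mulrDl itv_length_split.
Qed.

Local Open Scope ereal_scope.

Lemma boxpre_split (A : set (Rn R n)) i c :
  boxpre (A `&` halfspace i c) + boxpre (A `&` ~` halfspace i c) <= boxpre A.
Proof.
apply: le_ereal_inf_tmp => r [[-> ->]|[a [b [-> ->]]]].
  by rewrite !set0I boxpre0 adde0.
rewrite box_halfspace box_halfspaceC -(boxvol_split a b i c) EFinD.
by apply: leeD; apply: ereal_inf_lbound; right; do 2 eexists.
Qed.

Lemma measurable_halfspace i c : measurable (halfspace i c : set (LRn R n)).
Proof.
apply: le_caratheodory_measurable => X.
apply: le_ereal_inf_tmp => s [F [_ XF] <-].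
have cover (H : set (Rn R n)) :
    leb_outer (X `&` H) <= \sum_(k <oo) boxpre (F k `&` H).
  apply: ereal_inf_lbound; exists (fun k => F k `&` H) => //.
  by split => // y [/XF [k _ Fy] Hy]; exists k.
apply: le_trans (leeD (cover _) (cover _)) _.
rewrite -nneseriesD; [|by move=> *; exact: boxpre_ge0..].
apply: lee_nneseries => k _; last exact: boxpre_split.
by rewrite adde_ge0 // boxpre_ge0.
Qed.

Lemma measurable_box a b : measurable (box a b : set (LRn R n)).
Proof.
have -> : box a b = \bigcap_(i in [set: 'I_n])
    (halfspace i (b ord0 i) `&` ~` halfspace i (a ord0 i)).
  apply/seteqP; split=> [y yab i _|y yab i]; last first.
    by have [/= yb /negP] := yab i Logic.I; rewrite -leNgt => ->.
  by have /andP[ay yb] := yab i; split => //=; apply/negP; rewrite -leNgt.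
apply: fin_bigcap_measurable; first exact: finite_finset.
by move=> i _; apply: measurableI; [|apply: measurableC]; exact: measurable_halfspace.
Qed.

Lemma lebesgue_n_set1 (x : LRn R n) : (0 < n)%N -> lebesgue_n [set x] = 0.
Proof.
move=> n0; change (leb_outer [set x] = 0); apply/eqP; rewrite eq_le outer_measure_ge0 andbT.
apply/lee_addgt0Pr => e e0; rewrite add0e.
pose d := Num.min e 1%R.
have d0 : (0 < d)%R by rewrite lt_min e0 ltr01.
have d1 : (d <= 1)%R by rewrite ge_min lexx orbT.
pose b : 'rV[R]_n := \row_j (x ord0 j + d)%R.
apply: le_trans (le_outer_measure _ _ (box x b) _) _.
  by move=> y -> j; rewrite mxE lexx ltrDl d0.
apply: le_trans (leb_outer_box _ _) _; rewrite lee_fin /boxvol.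
rewrite (eq_bigr (fun _ => d)); last first.
  by move=> j _; rewrite mxE addrAC subrr add0r; apply/max_idPl/ltW.
rewrite prodr_const card_ord; apply: (le_trans (y := d)); last by rewrite ge_min lexx.
case: n n0 {b} => // m _; rewrite exprS ler_piMr //; first exact: ltW.
exact: exprn_ile1 (ltW d0) d1.
Qed.

Lemma measurable_set1 (x : LRn R n) : (0 < n)%N -> measurable ([set x] : set (LRn R n)).
Proof. by move=> n0; apply: outer_measure0_caratheodory; exact: lebesgue_n_set1. Qed.

Lemma le_lebesgue_n (A B : set (LRn R n)) : A `<=` B -> lebesgue_n A <= lebesgue_n B.
Proof. exact: le_outer_measure. Qed.

Lemma lebesgue_nU2 (A B : set (LRn R n)) :
  lebesgue_n (A `|` B) <= lebesgue_n A + lebesgue_n B.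
Proof. exact: outer_measureU2. Qed.

Local Close Scope ereal_scope.

Definition grid_cube (k : nat) (z : {ffun 'I_n -> int}) : set (Rn R n) :=
  box (\row_j ((z j)%:~R / k.+1%:R)) (\row_j ((z j + 1)%:~R / k.+1%:R)).

Lemma open_grid_cover (O : set (Rn R n)) y : open (O : set 'rV[R]_n) -> O y ->
  exists k z, grid_cube k z y /\ grid_cube k z `<=` O.
Proof.
move=> oO Oy; have /nbhs_ballP [e e0 yeO] := oO y Oy.
have ie0 : 0 <= e^-1 by rewrite invr_ge0 ltW.
pose k := Num.bound (e^-1).
have ke : k.+1%:R^-1 < e.
  rewrite -[e]invrK ltf_pV2 ?posrE ?invr_gt0 ?ltr0n //.
  by apply: (lt_trans (archi_boundP ie0)); rewrite ltr_nat.
have kp : (0 < k.+1%:R :> R) by rewrite ltr0n.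
pose z : {ffun 'I_n -> int} := [ffun j => Num.floor (y ord0 j * k.+1%:R)].
have ycube : grid_cube k z y.
  move=> j; rewrite !mxE ffunE; apply/andP; split.
    by rewrite ler_pdivrMr // floor_le.
  by rewrite ltr_pdivlMr // -floor_lt_int ltrDl.
exists k, z; split => // w wc; apply: yeO; split => // i j.
have -> : i = ord0 := ord1 i.
rewrite -ball_normE /=.
have := ycube j; have := wc j; rewrite !mxE ffunE intrD mulrDl mul1r.
move: (_ / _) => lo /andP[h1 h2] /andP[h3 h4].
apply: le_lt_trans ke; move: (k.+1%:R^-1) h2 h4 => h h2 h4.
by rewrite ler_norml; apply/andP; split; lra.
Qed.

Lemma measurable_open (O : set (LRn R n)) : open (O : set 'rV[R]_n) -> measurable O.
Proof.
move=> oO.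
pose F (m : nat) : set (LRn R n) := if unpickle m is Some (k, z) then
  (if `[< grid_cube k z `<=` O >] then grid_cube k z else set0) else set0.
have -> : O = \bigcup_m F m.
  apply/seteqP; split => [y Oy|y [m _]]; last first.
    by rewrite /F; case: unpickle => [[k z]|] //; case: asboolP => // H /H.
  have [k [z [yc cO]]] := open_grid_cover oO Oy.
  by exists (pickle (k, z)) => //; rewrite /F pickleK; case: asboolP.
apply: bigcupT_measurable => m; rewrite /F.
by case: unpickle => [[k z]|] //; case: asboolP => // _; exact: measurable_box.
Qed.

End lebesgue_outer_measure.

Section euclidean_distance.
Context {R : realType} {n : nat}.
Implicit Types (x y : 'rV[R]_n) (r : R).

Lemma eucl_distE x y :
  eucl_dist x y = Num.sqrt (\sum_(i < n) (x ord0 i - y ord0 i) ^+ 2).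
Proof. by rewrite /eucl_dist /enorm; under eq_bigr do rewrite !mxE. Qed.

Lemma eucl_dist_ge0 x y : 0 <= eucl_dist x y.
Proof. exact: sqrtr_ge0. Qed.

Lemma eucl_dist_gt0 x y : x <> y -> 0 < eucl_dist x y.
Proof.
move=> xy; rewrite eucl_distE sqrtr_gt0.
have [j xyj] : exists j, x ord0 j != y ord0 j.
  apply: contrapT => H; apply: xy; apply/rowP => j.
  by apply/eqP; apply: contrapT => hj; apply: H; exists j; apply/negP.
rewrite (bigD1 j) //=; apply: (lt_le_trans (y := (x ord0 j - y ord0 j) ^+ 2)).
  by rewrite exprn_even_gt0 //= subr_eq0.
by rewrite lerDl; apply: sumr_ge0 => i _; exact: sqr_ge0.
Qed.

Lemma ler_coord_eucl_dist x y j : `|x ord0 j - y ord0 j| <= eucl_dist x y.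
Proof.
rewrite eucl_distE -sqrtr_sqr ler_sqrt; last by apply: sumr_ge0 => i _; exact: sqr_ge0.
by rewrite (bigD1 j) //= lerDl; apply: sumr_ge0 => i _; exact: sqr_ge0.
Qed.

Lemma eucl_dist_le_coord x y r : 0 <= r ->
  (forall j, `|x ord0 j - y ord0 j| <= r) -> eucl_dist x y <= n%:R * r.
Proof.
move=> r0 xyr; rewrite eucl_distE -(ger0_norm (mulr_ge0 (ler0n _ n) r0)) -sqrtr_sqr.
rewrite ler_sqrt; last exact: sqr_ge0.
apply: (le_trans (y := \sum_(i < n) r ^+ 2)).
  apply: ler_sum => i _; rewrite -real_normK ?num_real //.
  by rewrite lerXn2r ?nnegrE ?normr_ge0.
rewrite sumr_const card_ord exprMn -[r ^+ 2 *+ n]mulr_natl.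
apply: ler_pM => //; first exact: sqr_ge0.
by case: n => [|m]; rewrite ?expr0n // expr2 ler_peMr ?ler0n // ler1n.
Qed.

Definition centered_box x r : set (Rn R n) :=
  box (\row_j (x ord0 j - r)) (\row_j (x ord0 j + r)).

Lemma eball_sub_centered_box x r : eball x r `<=` centered_box x r.
Proof.
move=> y /= xyr j; rewrite !mxE.
have /le_lt_trans/(_ xyr) := ler_coord_eucl_dist x y j.
by rewrite ltr_norml => /andP[h1 h2]; apply/andP; split; lra.
Qed.

Lemma eucl_dist_centered_box x r y : 0 <= r -> centered_box x r y ->
  eucl_dist x y <= n%:R * r.
Proof.
move=> r0 xry; apply: eucl_dist_le_coord => // j.
by have := xry j; rewrite !mxE ler_norml => /andP[h1 h2]; apply/andP; split; lra.
Qed.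

End euclidean_distance.

Definition dilation_bound (R : realType) (phi : R -> R) (n : nat) (alpha K : R) :=
  forall u lam, 0 < u -> 1 <= lam -> phi (lam `^ (- alpha) * u) <= K * lam ^+ n * phi u.

Section young_function.
Context {R : realType} {phi : R -> R}.
Hypothesis phiY : young_function phi.

Lemma young_gt0 x : 0 < x -> 0 < phi x.
Proof. by case: phiY => _ [_ [_ [phi_gt0 _]]]; exact: phi_gt0. Qed.

Lemma young_ge0 x : 0 <= x -> 0 <= phi x.
Proof.
rewrite le_eqVlt => /predU1P[<-|/young_gt0/ltW//].
by case: phiY => _ [_ [-> _]].
Qed.

(* convexity and [phi 0 = 0] give [phi x <= (x / y) * phi y] *)
Lemma young_le x y : 0 <= x -> x <= y -> phi x <= phi y.
Proof.
move=> x0 xy; have [y0|y0] := eqVneq y 0.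
  by have -> : x = y by apply/eqP; rewrite eq_le xy y0 x0.
have {}y0 : 0 < y by rewrite lt_neqAle eq_sym y0 (le_trans x0 xy).
case: phiY => _ [cvx [phi0 _]].
have xy0 : 0 <= x / y by rewrite divr_ge0 // ltW.
have xy1 : x / y <= 1 by rewrite ler_pdivrMr // mul1r.
have := cvx y 0 (x / y) (ltW y0) (lexx 0) (introT andP (conj xy0 xy1)).
rewrite mulr0 addr0 phi0 mulr0 addr0 divfK ?gt_eqF // => /le_trans; apply.
by rewrite -[leRHS]mul1r ler_wpM2r // young_ge0 // ltW.
Qed.

Lemma dilation_ratio_le_Lambda_up (n : nat) (alpha u lam : R) : alpha < 0 -> 0 < u -> 1 <= lam ->
  ((lam * (phi (lam `^ (- alpha) * u) / phi u / (2 * lam) ^+ n.+1))%:E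
    <= Lambda_up n phi alpha)%E.
Proof.
move=> a0 u0 l1; have l0 : 0 < lam := lt_le_trans ltr01 l1.
have pu : 0 < phi u := young_gt0 u0.
have dil_ge0 t : 0 <= t -> 0 <= phi (t `^ (- alpha) * u).
  by move=> t0; rewrite young_ge0 // mulr_ge0 ?powR_ge0 ?ltW.
apply: le_trans (ereal_sup_ubound _); last by exists u.
rewrite EFinM muleC.
have -> : lam%:E = lebesgue_measure (`[lam, 2 * lam]%classic : set R).
  rewrite lebesgue_measure_itv /= lte_fin ifT ?ltr_pMl ?ltr1n //.
  by rewrite -EFinD; congr _%:E; ring.
apply: mul_measure_le_integral.
- exact: measurable_itv.
- by move=> t /=; rewrite !in_itv /= => /andP[lt _]; rewrite (le_trans l1 lt).
- by rewrite !divr_ge0 ?exprn_ge0 ?mulr_ge0 ?dil_ge0 ?ltW.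
- move=> t /=; rewrite in_itv /= andbT => t1.
  by rewrite !divr_ge0 ?exprn_ge0 ?dil_ge0 ?ltW // (lt_le_trans ltr01 t1).
move=> t /=; rewrite in_itv /= => /andP[lt t2].
have t0 : 0 < t := lt_le_trans l0 lt.
apply: ler_pM.
- by rewrite divr_ge0 ?dil_ge0 // ltW.
- by rewrite invr_ge0 exprn_ge0 // mulr_ge0 // ltW.
- rewrite ler_pM2r ?invr_gt0 //; apply: young_le.
    by rewrite mulr_ge0 ?powR_ge0 // ltW.
  by rewrite ler_pM2r // ge0_ler_powR // ?nnegrE ?oppr_ge0 ?ltW.
- rewrite lef_pV2 ?posrE ?exprn_gt0 ?mulr_gt0 // lerXn2r // nnegrE ltW //.
  by rewrite mulr_gt0.
Qed.

Lemma Lambda_up_dilation_bound (n : nat) (alpha : R) : alpha < 0 ->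
  (Lambda_up n phi alpha < +oo)%E -> exists2 K, 0 < K & dilation_bound phi n alpha K.
Proof.
move=> a0 Lfin.
have L1 := dilation_ratio_le_Lambda_up n a0 ltr01 (lexx 1).
rewrite powR1 /= !mul1r mulr1 divff ?gt_eqF ?young_gt0 // mul1r in L1.
have Lf : Lambda_up n phi alpha \is a fin_num.
  by rewrite fin_numElt Lfin andbT (lt_le_trans _ L1) ?ltNyr.
set L := fine (Lambda_up n phi alpha).
exists (2 ^+ n.+1 * L).
  rewrite mulr_gt0 ?exprn_gt0 // -lte_fin /L fineK //.
  by apply: lt_le_trans L1; rewrite lte_fin invr_gt0 exprn_gt0.
move=> u lam u0 l1; have l0 : 0 < lam := lt_le_trans ltr01 l1.
have pu : 0 < phi u := young_gt0 u0.
have := dilation_ratio_le_Lambda_up n a0 u0 l1; rewrite -(fineK Lf) lee_fin -/L.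
set P := phi _ => PL.
have -> : P = lam * (P / phi u / (2 * lam) ^+ n.+1) * (2 ^+ n.+1 * lam ^+ n * phi u).
  by rewrite exprMn !exprS; field; rewrite !gt_eqF ?exprn_gt0.
rewrite [leRHS](_ : _ = L * (2 ^+ n.+1 * lam ^+ n * phi u)); last by ring.
by rewrite ler_wpM2r // !mulr_ge0 ?exprn_ge0 // ltW.
Qed.

Lemma dilation_bound_kernel_le (n : nat) (alpha K t d rho : R) :
  0 < K -> dilation_bound phi n alpha K -> 0 < t -> 0 < d -> d <= rho ->
  phi (t * rho `^ (- alpha)) / (K * rho ^+ (2 * n)) <=
  phi (t * d `^ (- alpha)) / d ^+ (2 * n).
Proof.
move=> K0 phiK t0 d0 drho; have rho0 : 0 < rho := lt_le_trans d0 drho.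
have u0 : 0 < t * d `^ (- alpha) by rewrite mulr_gt0 // powR_gt0.
have l1 : 1 <= rho / d by rewrite ler_pdivlMr // mul1r.
have := phiK _ _ u0 l1.
have -> : (rho / d) `^ (- alpha) * (t * d `^ (- alpha)) = t * rho `^ (- alpha).
  rewrite mulrC -mulrA -powRM ?divr_ge0 ?ltW //.
  by rewrite (mulrC d) divfK // gt_eqF.
set P := phi _; set Q := phi _ => PQ.
have Q0 : 0 <= Q by apply: young_ge0; rewrite mulr_ge0 ?powR_ge0 ?ltW.
apply: (le_trans (y := K * (rho / d) ^+ n * Q / (K * rho ^+ (2 * n)))).
  by rewrite ler_pM2r // invr_gt0 mulr_gt0 ?exprn_gt0.
have -> : K * (rho / d) ^+ n * Q / (K * rho ^+ (2 * n)) = Q / (d ^+ n * rho ^+ n).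
  by rewrite expr_div_n mulnC exprM; field; rewrite !gt_eqF ?exprn_gt0.
rewrite mulnC exprM expr2; apply: ler_wpM2l => //.
rewrite lef_pV2 ?posrE ?mulr_gt0 ?exprn_gt0 // ler_pM2l ?exprn_gt0 //.
by rewrite lerXn2r ?nnegrE // ltW.
Qed.

End young_function.

Section kernel_integral.
Context {R : realType} {n : nat} {phi : R -> R}.
Hypothesis phiY : young_function phi.

Lemma kernel_integral_ge (alpha K t rho : R) (x : LRn R n) (A S : set (LRn R n)) :
  0 < K -> dilation_bound phi n alpha K -> 0 < t -> 0 < rho ->
  measurable S -> S `<=` A -> (forall y, S y -> 0 < eucl_dist x y <= rho) ->
  ((phi (t * rho `^ (- alpha)) / (K * rho ^+ (2 * n)))%:E * lebesgue_n S <=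
   \int[@lebesgue_n R n]_(y in A)
      (phi (t * eucl_dist x y `^ (- alpha)) / eucl_dist x y ^+ (2 * n))%:E)%E.
Proof.
move=> K0 phiK t0 rho0 mS SA Sx; apply: mul_measure_le_integral => //.
- by rewrite divr_ge0 ?(young_ge0 phiY) ?mulr_ge0 ?powR_ge0 ?exprn_ge0 // ltW.
- by move=> y _; rewrite divr_ge0 ?(young_ge0 phiY) ?mulr_ge0 ?powR_ge0 ?exprn_ge0 ?eucl_dist_ge0 // ltW.
- by move=> y /Sx /andP[dxy0 dxy]; exact: dilation_bound_kernel_le.
Qed.

End kernel_integral.

Section near_subsets.
Context {R : realType} {n : nat}.
Variables (O E : set (LRn R n)) (x : LRn R n).
Hypotheses (n_gt0 : (0 < n)%N) (oO : open (O : set 'rV[R]_n)) (mE : measurable E).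
Hypothesis (Ox : O x).
Local Open Scope ereal_scope.

Lemma vol_ratio_le1 : (vol_ratio O E <= 1)%R.
Proof.
rewrite /vol_ratio; case: ifPn => // _.
have : lebesgue_n (O `\` E) <= lebesgue_n O by apply: le_lebesgue_n; exact: subDsetl.
have : 0 <= lebesgue_n (O `\` E) := measure_ge0 _ _.
case: (lebesgue_n (O `\` E)) (lebesgue_n O) => [a| |] [b| |] //=;
  rewrite ?lee_fin ?invr0 ?mulr0 // => a0 ab.
have [->|b0] := eqVneq b 0%R; first by rewrite invr0 mulr0.
by rewrite ler_pdivrMr ?mul1r // lt_neqAle eq_sym b0 (le_trans a0 ab).
Qed.

Lemma mul_vol_ratio_le e : E `<=` O -> lebesgue_n E = e%:E ->
  (e * vol_ratio O E)%:E <= lebesgue_n (O `\` E).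
Proof.
move=> EO Ee; have e0 : (0 <= e)%R by rewrite -lee_fin -Ee measure_ge0.
rewrite /vol_ratio; case: ifPn => [_|Oinf].
  by apply: mul_fine_ratio_le; rewrite ?measure_ge0 // -Ee le_lebesgue_n.
have : lebesgue_n O <= lebesgue_n (O `\` E) + e%:E.
  rewrite -Ee; apply: le_trans (lebesgue_nU2 _ _); apply: le_lebesgue_n => y Oy.
  by have [Ey|nEy] := pselect (E y); [right|left].
move: Oinf; rewrite ge0_fin_numE ?measure_ge0 // -leNgt leye_eq => /eqP ->.
move=> OE; rewrite mulr1 (_ : lebesgue_n (O `\` E) = +oo) ?leey //.
apply/eqP; rewrite -leye_eq leNgt; apply/negP => OEfin.
by move: OE; rewrite leNgt lte_add_pinfty ?ltry.
Qed.

Lemma near_subset_ball r : (0 <= r)%R -> exists S : set (LRn R n),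
  [/\ measurable S, S `<=` O `\` E,
      forall y, S y -> (0 < eucl_dist x y <= n%:R * r)%R
    & lebesgue_n (eball x r `&` O) <= lebesgue_n S + lebesgue_n E].
Proof.
move=> r0; set S := ((O `&` centered_box x r) `\` E) `\` [set x].
exists S; split.
- apply: measurableD; last exact: measurable_set1.
  apply: measurableD => //; apply: measurableI; first exact: measurable_open.
  exact: measurable_box.
- by move=> y [[[Oy _] Ey] _].
- move=> y [[[_ Qy] _] yx]; rewrite eucl_dist_gt0 ?eucl_dist_centered_box //.
  by move=> xy; apply: yx; rewrite xy.
rewrite -[leRHS]adde0 -(lebesgue_n_set1 x n_gt0) -addeA.
apply: le_trans (le_lebesgue_n (B := S `|` (E `|` [set x])) _) _.
  move=> y [/eball_sub_centered_box Qy Oy].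
  have [Ey|nEy] := pselect (E y); first by right; left.
  by have [yx|yx] := pselect (y = x); [right; right|left].
by apply: le_trans (lebesgue_nU2 _ _) _; rewrite leeD2l // lebesgue_nU2.
Qed.

Lemma near_subset_bounded r : 2%:E * ediam O <= r%:E -> exists S : set (LRn R n),
  [/\ measurable S, S `<=` O `\` E, forall y, S y -> (0 < eucl_dist x y <= r)%R
    & lebesgue_n (O `\` E) <= lebesgue_n S].
Proof.
move=> diam_r; set S := (O `\` E) `\` [set x].
exists S; split.
- apply: measurableD; last exact: measurable_set1.
  by apply: measurableD => //; exact: measurable_open.
- by move=> y [].
- move=> y [[Oy _] yx]; rewrite eucl_dist_gt0 /=; last by move=> xy; apply: yx; rewrite xy.
  have : (eucl_dist x y)%:E <= ediam O by apply: ereal_sup_ubound; exists x => //; exists y.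
  move/(lee_wpmul2l (lee0n 2))/le_trans/(_ diam_r); rewrite -EFinM lee_fin.
  by have := eucl_dist_ge0 x y; lra.
rewrite -[leRHS]adde0 -(lebesgue_n_set1 x n_gt0).
apply: le_trans (lebesgue_nU2 _ _); apply: le_lebesgue_n => y OEy.
by have [yx|yx] := pselect (y = x); [right|left].
Qed.

Lemma exists_near_subset (theta r e : R) : (0 < r)%R -> E `<=` O ->
  lebesgue_n E = e%:E -> (theta * r ^+ n = 2 * e)%R ->
  (r%:E < 2%:E * ediam O -> (theta * r ^+ n)%:E <= lebesgue_n (eball x r `&` O)) ->
  exists S : set (LRn R n),
  [/\ measurable S, S `<=` O `\` E,
      forall y, S y -> (0 < eucl_dist x y <= n%:R * r)%R
    & (e * vol_ratio O E)%:E <= lebesgue_n S].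
Proof.
move=> r0 EO Ee rn reg; have e0 : (0 <= e)%R by rewrite -lee_fin -Ee measure_ge0.
have [r_lt|r_ge] := ltP r%:E (2%:E * ediam O).
  have [S [mS SOE Sx ballS]] := near_subset_ball (ltW r0).
  exists S; split => //.
  have : (e + e)%:E <= lebesgue_n S + e%:E.
    by rewrite -Ee -mulr2n -mulr_natl -rn; exact: le_trans (reg r_lt) ballS.
  rewrite EFinD leeD2rE // => eS; apply: le_trans eS.
  by rewrite lee_fin ler_piMr // vol_ratio_le1.
have [S [mS SOE Sx OES]] := near_subset_bounded r_ge.
exists S; split => //; last exact: le_trans (mul_vol_ratio_le EO Ee) OES.
move=> y /Sx /andP[-> /le_trans]; apply.
by rewrite ler_peMl //; [exact: ltW | rewrite ler1n].
Qed.

End near_subsets.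

Unset Implicit Arguments.

Theorem lemma1p5 (R : realType) (n : nat) (O : set (LRn R n)) (alpha : R)
    (phi : R -> R) :
  (2 <= n)%N -> is_domain O -> globally_regular O ->
  - n%:R < alpha < 0 -> young_function phi ->
  (Lambda_low n phi alpha < +oo)%E -> (Lambda_up n phi alpha < +oo)%E ->
  exists C1 C2 : R, 0 < C1 /\ 0 < C2 /\
    forall (t : R) (x : LRn R n) (E : set (LRn R n)),
      0 < t -> O x -> measurable E -> E `<=` O ->
      (0 < lebesgue_n E)%E -> (lebesgue_n E < +oo)%E ->
      ((C1 * (1 / fine (lebesgue_n E)) * vol_ratio O E
          * phi (C2 * t * fine (lebesgue_n E) `^ (`|alpha| / n%:R)))%:E
       <= \int[@lebesgue_n R n]_(y in O `\` E)
            (phi (t * eucl_dist x y `^ (- alpha)) / eucl_dist x y ^+ (2 * n))%:E)%E.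
Proof.
move=> n2 [_ [oO _]] [th [/andP[th0 _] reg]] /andP[_ a0] phiY _ Lup.
have n0 : (0 < n)%N by apply: leq_trans n2.
have [K K0 phiK] := Lambda_up_dilation_bound phiY a0 Lup.
pose D := 2 * n%:R ^+ n / th.
have D0 : 0 < D by rewrite divr_gt0 ?mulr_gt0 ?exprn_gt0 ?ltr0n.
exists (1 / (K * D ^+ 2)), (D `^ (- alpha / n%:R)).
split; first by rewrite divr_gt0 // mulr_gt0 // exprn_gt0.
split=> [|t x E t0 Ox mE EO E0 Efin]; first exact: powR_gt0.
have Ee : lebesgue_n E = (fine (lebesgue_n E))%:E by rewrite fineK // ge0_fin_numE // ltW.
set e := fine _ in Ee *; have e0 : 0 < e by rewrite -lte_fin -Ee.
have [r r0 rn] : exists2 r, 0 < r & r ^+ n = 2 * e / th.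
  by apply: exprn_onto_gt0; rewrite // divr_gt0 ?mulr_gt0.
have rhon : (n%:R * r) ^+ n = D * e by rewrite exprMn rn /D; field; rewrite gt_eqF.
have thrn : th * r ^+ n = 2 * e by rewrite rn mulrCA divff ?gt_eqF ?mulr1.
have [S [mS SOE Sx Se]] := exists_near_subset n0 oO mE Ox r0 EO Ee thrn (reg x Ox r r0).
have rho0 : 0 < n%:R * r by rewrite mulr_gt0 // ltr0n.
apply: le_trans (kernel_integral_ge phiY K0 phiK t0 rho0 mS SOE Sx).
have -> : `|alpha| = - alpha by rewrite ltr0_norm.
rewrite (_ : _ * t * _ = t * (n%:R * r) `^ (- alpha)); last first.
  by rewrite (powR_exprn_mul _ n0 (ltW D0) (ltW e0) (ltW rho0) rhon); ring.
rewrite (_ : _ * phi _ = phi (t * (n%:R * r) `^ (- alpha)) / (K * (n%:R * r) ^+ (2 * n))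
                          * (e * vol_ratio O E)).
  rewrite EFinM; apply: lee_wpmul2l Se; rewrite lee_fin.
  by rewrite divr_ge0 ?(young_ge0 phiY) ?mulr_ge0 ?powR_ge0 ?exprn_ge0 // ltW.
by rewrite mulnC exprM rhon; field; rewrite !gt_eqF.
Qed.
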